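(* Let $A$ be a coherent reduced B\'ezout commutative ring and $E$ a non-zero FP-injective $A$-module such that every finitely generated submodule of $E$ is cyclic. Then for any $x,y\in E$ there exist $z\in E$ and an invertible $2\times 2$ matrix $B$ with entries in $A$ such that $\binom{z}{0}=B\binom{x}{y}$.
   Context: A ring is coherent if all its finitely generated ideals are finitely presented, and B\'ezout if every finitely generated ideal is principal. A module $E$ is FP-injective if $\mathrm{Ext}^1(F,E)=0$ for all finitely presented modules $F$. *)

From HB Require Import structures.
From mathcomp Require Import all_boot all_order all_algebra.
Set Implicit Arguments. Unset Strict Implicit. Unset Printing Implicit Defensive.
Import GRing.Theory.
Local Open Scope ring_scope.

Definition fg_subset_free (A : comPzRingType) (n : nat) (P : ('I_n -> A) -> Prop) :=
  exists (m : nat) (h : 'I_m -> 'I_n -> A),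
    forall c : 'I_n -> A,
      P c <-> exists d : 'I_m -> A, forall i, c i = \sum_(j < m) d j * h j i.

Definition relations (A : comPzRingType) (M : lmodType A) (n : nat) (g : 'I_n -> M)
  : ('I_n -> A) -> Prop :=
  fun c => \sum_(i < n) c i *: g i = 0.

(* F is finitely presented: there is a finite generating family whose module of
   relations is finitely generated (i.e. A^m -> A^n -> F -> 0 exact). *)
Definition finitely_presented (A : comPzRingType) (F : lmodType A) :=
  exists (n : nat) (g : 'I_n -> F),
    (forall f : F, exists c : 'I_n -> A, f = \sum_(i < n) c i *: g i) /\
    fg_subset_free (relations g).

Definition gen_ideal (A : comPzRingType) (m : nat) (s : 'I_m -> A) : A -> Prop :=
  fun a => exists c : 'I_m -> A, a = \sum_(i < m) c i * s i.

Definition fp_ideal (A : comPzRingType) (I : A -> Prop) :=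
  exists (n : nat) (g : 'I_n -> A),
    (forall a, I a <-> exists c : 'I_n -> A, a = \sum_(i < n) c i * g i) /\
    fg_subset_free (fun c : 'I_n -> A => \sum_(i < n) c i * g i = 0).

Definition coherent_ring (A : comPzRingType) :=
  forall (m : nat) (s : 'I_m -> A), fp_ideal (gen_ideal s).

Definition bezout_ring (A : comPzRingType) :=
  forall (m : nat) (s : 'I_m -> A), exists d : A,
    forall a, gen_ideal s a <-> exists e : A, a = e * d.

Definition reduced_ring (A : comPzRingType) :=
  forall (a : A) (k : nat), a ^+ k = 0 -> a = 0.

(* Ext^1_A(F, E) = 0, in Yoneda form: every short exact sequence
   0 -> E -> M -> F -> 0 of A-modules splits. *)
Definition Ext1_vanishes (A : comPzRingType) (F E : lmodType A) :=
  forall (M : lmodType A) (i : {linear E -> M}) (p : {linear M -> F}),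
    injective i -> (forall f : F, exists m : M, p m = f) ->
    (forall m : M, p m = 0 <-> exists e : E, m = i e) ->
    exists r : {linear M -> E}, forall e : E, r (i e) = e.

Definition FP_injective (A : comPzRingType) (E : lmodType A) :=
  forall F : lmodType A, finitely_presented F -> Ext1_vanishes F E.

Definition fg_submodules_cyclic (A : comPzRingType) (E : lmodType A) :=
  forall (n : nat) (g : 'I_n -> E), exists z : E,
    forall x : E, (exists c : 'I_n -> A, x = \sum_(i < n) c i *: g i) <->
                  exists a : A, x = a *: z.

(** Everything happens in a cyclic submodule A z: writing x = a z and y = b z,
    it suffices to find p, q, al, be with p al + q be = 1 and be a = al b, for
    then [[p, q], [-be, al]] has determinant 1 and kills the second coordinate.
    Let d generate (a, b).  Coherence makes the annihilator of d finitely
    generated, hence principal, say (g), by the Bezout property.  Since A is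
    reduced, a generator d' of (a + g, b) is a regular element, so writing
    a + g = al d' and b = be d' the pair (al, be) is unimodular, and
    be a - al b = - g be = 0. *)
From HB Require Import structures.
From mathcomp Require Import all_boot all_order all_algebra.
From mathcomp Require Import ring.
Import GRing.Theory.
Local Open Scope ring_scope.

Lemma sum_ord2 (V : nmodType) (F : 'I_2 -> V) : \sum_(i < 2) F i = F 0 + F 1.
Proof. by rewrite big_ord_recl big_ord1; congr (_ + F _); exact: val_inj. Qed.

Section BezoutCoherent.
Context {A : comPzRingType}.

Definition pair2 (a b : A) : 'I_2 -> A := fun i => if i == 0 then a else b.

Lemma gen_ideal2P (a b x : A) :
  gen_ideal (pair2 a b) x <-> exists p q, x = p * a + q * b.
Proof.
split; first by case=> c; rewrite sum_ord2 => ->; exists (c 0), (c 1).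
by case=> p [q ->]; exists (pair2 p q); rewrite sum_ord2.
Qed.

Lemma gen_ideal1P (d x : A) :
  gen_ideal (fun _ : 'I_1 => d) x <-> exists e, x = e * d.
Proof.
split; first by case=> c; rewrite big_ord1 => ->; exists (c 0).
by case=> e ->; exists (fun _ => e); rewrite big_ord1.
Qed.

Lemma gen_ideal_mul0 {m : nat} {k : 'I_m -> A} {d x : A} :
  (forall j, k j * d = 0) -> gen_ideal k x -> x * d = 0.
Proof.
move=> kd [c ->]; rewrite mulr_suml big1 // => j _.
by rewrite -mulrA kd mulr0.
Qed.

Lemma sum_delta (n : nat) (F : 'I_n -> A) (i : 'I_n) :
  \sum_(j < n) (if j == i then 1 else 0) * F j = F i.
Proof.
rewrite (bigD1 i) //= eqxx mul1r big1 ?addr0 // => j /negbTE ->.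
exact: mul0r.
Qed.

Lemma bezout_gcd2 (hbez : bezout_ring A) (a b : A) :
  exists d p q a1 b1, [/\ d = p * a + q * b, a = a1 * d & b = b1 * d].
Proof.
have [d Hd] := hbez 2 (pair2 a b).
have [p [q dE]] : exists p q, d = p * a + q * b.
  by apply/gen_ideal2P/Hd; exists 1; rewrite mul1r.
have [a1 aE] : exists a1, a = a1 * d.
  by apply/Hd/gen_ideal2P; exists 1, 0; ring.
have [b1 bE] : exists b1, b = b1 * d.
  by apply/Hd/gen_ideal2P; exists 0, 1; ring.
by exists d, p, q, a1, b1.
Qed.

(* With d = sum_i c_i g'_i, g'_i = e_i d and u = sum_i c_i e_i, every t in the
   annihilator satisfies t = t u + t (1 - u), where (1 - u) d = 0 and t u lies
   in the ideal spanned by the relations of the generators g'. *)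
Lemma coherent_annihilator_fg (hcoh : coherent_ring A) (d : A) :
  exists (m : nat) (k : 'I_m -> A) (v : A),
    [/\ forall j, k j * d = 0, v * d = 0 &
        forall t, t * d = 0 -> gen_ideal k (t - t * v)].
Proof.
have [n [g' [gen_d [m [h relP]]]]] := hcoh 1 (fun _ => d).
have [e g'E] : exists e : 'I_n -> A, forall i, g' i = e i * d.
  apply: (@fin_all_exists _ (fun _ => A) (fun i ei => g' i = ei * d)) => i.
  apply/gen_ideal1P/gen_d.
  by exists (fun j => if j == i then 1 else 0); rewrite sum_delta.
have [c dE] : exists c : 'I_n -> A, d = \sum_(i < n) c i * g' i.
  by apply/gen_d/gen_ideal1P; exists 1; rewrite mul1r.
pose u := \sum_(i < n) c i * e i.
exists m, (fun j => \sum_(i < n) h j i * e i), (1 - u); split.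
- move=> j; rewrite mulr_suml.
  under eq_bigr => i _ do rewrite -mulrA -g'E.
  by apply/(relP (h j)); exists (fun j' => if j' == j then 1 else 0) => i;
    rewrite sum_delta.
- rewrite mulrBl mul1r /u mulr_suml {1}dE.
  under [X in _ - X]eq_bigr => i _ do rewrite -mulrA -g'E.
  exact: subrr.
move=> t td.
have [dl dlE] : exists dl : 'I_m -> A,
    forall i, t * c i = \sum_(j < m) dl j * h j i.
  apply/relP; rewrite -[RHS]td dE mulr_sumr.
  by apply: eq_bigr => i _; rewrite mulrA.
exists dl; rewrite (_ : t - t * (1 - u) = t * u); last by ring.
rewrite /u mulr_sumr.
under eq_bigr => i _ do rewrite mulrA dlE mulr_suml.
rewrite exchange_big /=; apply: eq_bigr => j _.
by rewrite mulr_sumr; apply: eq_bigr => i _; rewrite !mulrA.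
Qed.

Lemma coherent_bezout_annihilator_principal
    (hcoh : coherent_ring A) (hbez : bezout_ring A) (d : A) :
  exists g, g * d = 0 /\ forall t, t * d = 0 -> exists s, t = s * g.
Proof.
have [m [k [v [kd vd annP]]]] := coherent_annihilator_fg hcoh d.
have [g0 g0P] := hbez m k.
have g0d : g0 * d = 0.
  by apply: (gen_ideal_mul0 kd); apply/g0P; exists 1; rewrite mul1r.
have [g [p [q [g1 [v1 [gE g0E vE]]]]]] := bezout_gcd2 hbez g0 v.
exists g; split; first by rewrite gE mulrDl -!mulrA g0d vd !mulr0 addr0.
move=> t /annP /g0P [s tE].
by exists (s * g1 + t * v1); rewrite mulrDl -!mulrA -g0E -vE -tE; ring.
Qed.

Lemma reduced_annihilator_shift_regular (hred : reduced_ring A)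
    {a b d g p q a1 t : A} :
  d = p * a + q * b -> a = a1 * d -> g * d = 0 ->
  (forall s, s * d = 0 -> exists r, s = r * g) ->
  t * (a + g) = 0 -> t * b = 0 -> t = 0.
Proof.
move=> dE aE gd annP tag tb.
have ag : a * g = 0 by rewrite aE -mulrA (mulrC d) gd mulr0.
have ta : t * a = 0.
  apply: (hred _ 2).
  have -> : (t * a) ^+ 2 = t * (a + g) * (t * a) - t * t * (a * g) by ring.
  by rewrite tag ag !mulr0 mul0r subr0.
have tg : t * g = 0 by move: tag; rewrite mulrDr ta add0r.
have [r tE] : exists r, t = r * g.
  by apply: annP; rewrite dE mulrDr mulrCA ta mulr0 add0r mulrCA tb mulr0.
by apply: (hred _ 2); rewrite expr2 {1}tE -mulrA (mulrC g) tg mulr0.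
Qed.

Lemma coherent_reduced_bezout_unimodular_proportional
    (hcoh : coherent_ring A) (hred : reduced_ring A) (hbez : bezout_ring A)
    (a b : A) :
  exists p q al be, p * al + q * be = 1 /\ be * a = al * b.
Proof.
have [d [p [q [a1 [b1 [dE aE bE]]]]]] := bezout_gcd2 hbez a b.
have [g [gd annP]] := coherent_bezout_annihilator_principal hcoh hbez d.
have [d' [p' [q' [al [be [d'E agE bE']]]]]] := bezout_gcd2 hbez (a + g) b.
have d'_reg t : t * d' = 0 -> t = 0.
  move=> td'; apply: (reduced_annihilator_shift_regular hred dE aE gd annP).
    by rewrite agE mulrCA td' mulr0.
  by rewrite bE' mulrCA td' mulr0.
have unimod : p' * al + q' * be = 1.
  apply/eqP; rewrite -subr_eq0 -opprB oppr_eq0; apply/eqP/d'_reg.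
  have -> : (1 - (p' * al + q' * be)) * d' =
            d' - (p' * (al * d') + q' * (be * d')) by ring.
  by rewrite -agE -bE' -d'E subrr.
have gbe : g * be = 0.
  by apply: d'_reg; rewrite -mulrA -bE' bE mulrCA gd mulr0.
exists p', q', al, be; split=> //.
have -> : be * a = be * (a + g) - g * be by ring.
by rewrite gbe subr0 agE bE' mulrCA.
Qed.

Definition mx2 (a b c e : A) : 'M[A]_2 :=
  \matrix_(i, j) if i == 0 then (if j == 0 then a else b)
                 else (if j == 0 then c else e).

Lemma mul_mx2 (a b c e a' b' c' e' : A) :
  mx2 a b c e *m mx2 a' b' c' e' =
  mx2 (a * a' + b * c') (a * b' + b * e') (c * a' + e * c') (c * b' + e * e').
Proof.
by apply/matrixP => i j; rewrite !mxE sum_ord2 !mxE;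
  case: i => [[|[|i]] Hi] //; case: j => [[|[|j]] Hj].
Qed.

Lemma mx2_1 : mx2 1 0 0 1 = 1%:M.
Proof.
by apply/matrixP => i j; rewrite !mxE;
  case: i => [[|[|i]] Hi] //; case: j => [[|[|j]] Hj].
Qed.

Lemma mx2_adj_inv {a b c e : A} : a * e - b * c = 1 ->
  mx2 a b c e *m mx2 e (- b) (- c) a = 1%:M /\
  mx2 e (- b) (- c) a *m mx2 a b c e = 1%:M.
Proof.
move=> det1; rewrite !mul_mx2 -mx2_1.
by split; congr mx2; first [ring | rewrite -det1; ring].
Qed.

End BezoutCoherent.

Lemma cyclic_pair {A : comPzRingType} {E : lmodType A}
    (hcyc : fg_submodules_cyclic E) (x y : E) :
  exists (z : E) (a b : A), x = a *: z /\ y = b *: z.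
Proof.
have [z zP] := hcyc 2 (fun i => if i == 0 then x else y).
have [a xE] : exists a, x = a *: z.
  by apply/zP; exists (pair2 1 0); rewrite sum_ord2 /= scale1r scale0r addr0.
have [b yE] : exists b, y = b *: z.
  by apply/zP; exists (pair2 0 1); rewrite sum_ord2 /= scale1r scale0r add0r.
by exists z, a, b.
Qed.

Theorem corollary3p5 (A : comPzRingType) (E : lmodType A)
  (hcoh : coherent_ring A) (hred : reduced_ring A) (hbez : bezout_ring A)
  (hE0 : exists e : E, e != 0)
  (hfpinj : FP_injective E) (hcyc : fg_submodules_cyclic E) :
  forall x y : E, exists (z : E) (B C : 'M[A]_2),
    B *m C = 1%:M /\ C *m B = 1%:M /\
    B 0 0 *: x + B 0 1 *: y = z /\
    B 1 0 *: x + B 1 1 *: y = 0.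
Proof.
move=> x y.
have [z [a [b [xE yE]]]] := cyclic_pair hcyc x y.
have [p [q [al [be [unimod prop]]]]] :=
  coherent_reduced_bezout_unimodular_proportional hcoh hred hbez a b.
have [BC CB] : mx2 p q (- be) al *m mx2 al (- q) (- - be) p = 1%:M /\
               mx2 al (- q) (- - be) p *m mx2 p q (- be) al = 1%:M.
  by apply: mx2_adj_inv; rewrite -unimod; ring.
rewrite opprK in BC CB.
exists (p *: x + q *: y), (mx2 p q (- be) al), (mx2 al (- q) be p).
do !split=> //; first by rewrite !mxE.
by rewrite !mxE /= xE yE !scalerA -scalerDl mulNr prop addNr scale0r.
Qed.
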